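(* Let all parameters $k_a,k_{epo},V_{max},K_M,V_1,k_{23},k_{32},BSL,k_{in},S_{max},SC_{50},N_P,T_P,N_R,T_R$ be positive, with $V_{max}>k_{epo}$ and $N_P$ even. Consider the autonomous (post-dose) P\'erez-Ruixo system with $C(t)=BSL+A_2(t)/V_1$, $V_e(t)=\frac{S_{max}C(t)}{SC_{50}+C(t)}\frac{N_P}{T_P}$: $$A_1'=-k_aA_1,\quad A_2'=k_{epo}-\frac{V_{max}A_2/V_1}{K_M+A_2/V_1},\quad A_3'=k_{23}A_2-k_{32}A_3,$$ $$P_1'=k_{in}-V_e(t)P_1,\quad P_i'=V_e(t)(P_{i-1}-P_i)\ (2\le i\le N_P/2),\quad P_{N_P/2+1}'=V_e(t)P_{N_P/2}-\tfrac{N_P}{T_P}P_{N_P/2+1},$$ $$P_i'=\tfrac{N_P}{T_P}(P_{i-1}-P_i)\ (N_P/2+2\le i\le N_P),\quad R_1'=\tfrac{N_P}{T_P}P_{N_P}-\tfrac{N_R}{T_R}R_1,\quad R_i'=\tfrac{N_R}{T_R}(R_{i-1}-R_i)\ (2\le i\le N_R).$$ Its homeostatic equilibrium, given by $A_1^*=0$, $A_2^*=\frac{V_1k_{epo}K_M}{V_{max}-k_{epo}}$, $A_3^*=\frac{k_{23}}{k_{32}}A_2^*$, $C^*=BSL+A_2^*/V_1$, $P_1^*=\frac{k_{in}(SC_{50}+C^* )}{S_{max}C^*}\frac{T_P}{N_P}$ (and the corresponding transit compartment values), is locally asymptotically stable.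
   Context: $A_1,A_2,A_3$ are EPO amounts in depot, central and peripheral compartments; $P_i$ erythrocyte progenitor transit compartments; $R_i$ reticulocyte transit compartments. *)

From Stdlib Require Import Reals Lra Arith.
Open Scope R_scope.

Record params := Params {
  ka : R; kepo : R; Vmax : R; KM : R; V1 : R; k23 : R; k32 : R;
  BSL : R; kin : R; Smax : R; SC50 : R;
  NP : nat; TP : R; NR : nat; TR : R }.

(* State vector: a function nat -> R, of which the coordinates 0 .. dim p - 1
   are meaningful:
     index 0 = A1, 1 = A2, 2 = A3,
     index 2+i = P_i   (1 <= i <= NP),
     index 2+NP+i = R_i (1 <= i <= NR). *)
Definition state := nat -> R.
Definition dim (p : params) : nat := (3 + NP p + NR p)%nat.

Definition hP (p : params) : nat := Nat.div2 (NP p).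
Definition kP (p : params) : R := INR (NP p) / TP p.
Definition kR (p : params) : R := INR (NR p) / TR p.

Definition conc (p : params) (x : state) : R := BSL p + x 1%nat / V1 p.
Definition Ve (p : params) (x : state) : R :=
  Smax p * conc p x / (SC50 p + conc p x) * kP p.

Definition field (p : params) (x : state) (i : nat) : R :=
  if (i =? 0)%nat then - ka p * x 0%nat
  else if (i =? 1)%nat then
    kepo p - Vmax p * (x 1%nat / V1 p) / (KM p + x 1%nat / V1 p)
  else if (i =? 2)%nat then k23 p * x 1%nat - k32 p * x 2%nat
  else if (i =? 3)%nat then kin p - Ve p x * x 3%nat                 (* P_1 *)
  else if (i <=? 2 + hP p)%nat then Ve p x * (x (i - 1)%nat - x i)   (* P_i, 2<=i<=NP/2 *)
  else if (i =? 3 + hP p)%nat then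
    Ve p x * x (2 + hP p)%nat - kP p * x (3 + hP p)%nat              (* P_{NP/2+1} *)
  else if (i <=? 2 + NP p)%nat then kP p * (x (i - 1)%nat - x i)     (* P_i, NP/2+2<=i<=NP *)
  else if (i =? 3 + NP p)%nat then
    kP p * x (2 + NP p)%nat - kR p * x (3 + NP p)%nat                (* R_1 *)
  else if (i <=? 2 + NP p + NR p)%nat then kR p * (x (i - 1)%nat - x i) (* R_i, 2<=i<=NR *)
  else 0.

Definition A2star (p : params) : R := V1 p * kepo p * KM p / (Vmax p - kepo p).
Definition Cstar (p : params) : R := BSL p + A2star p / V1 p.
Definition P1star (p : params) : R :=
  kin p * (SC50 p + Cstar p) / (Smax p * Cstar p) * (TP p / INR (NP p)).

Definition equil (p : params) (i : nat) : R :=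
  if (i =? 0)%nat then 0
  else if (i =? 1)%nat then A2star p
  else if (i =? 2)%nat then k23 p / k32 p * A2star p
  else if (i <=? 2 + hP p)%nat then P1star p                 (* P_1 .. P_{NP/2} *)
  else if (i <=? 2 + NP p)%nat then kin p * (TP p / INR (NP p)) (* P_{NP/2+1} .. P_NP *)
  else if (i <=? 2 + NP p + NR p)%nat then kin p * (TR p / INR (NR p)) (* R_1 .. R_NR *)
  else 0.

Definition near (d : nat) (x y : state) (r : R) : Prop :=
  forall i, (i < d)%nat -> Rabs (x i - y i) < r.

(* Time horizon [0,T) with T = None meaning +infinity. *)
Definition in_horizon (T : option R) (t : R) : Prop :=
  0 <= t /\ match T with Some T' => t < T' | None => True end.

Definition is_solution (d : nat) (F : state -> state) (x : R -> state)
    (T : option R) : Prop :=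
  (forall t, in_horizon T t -> 0 < t ->
     forall i, (i < d)%nat -> derivable_pt_lim (fun s => x s i) t (F (x t) i)) /\
  (forall i, (i < d)%nat -> forall eps, 0 < eps ->
     exists del, 0 < del /\ forall t, 0 <= t < del -> in_horizon T t ->
       Rabs (x t i - x 0 i) < eps).

Definition is_equilibrium (d : nat) (F : state -> state) (e : state) : Prop :=
  forall i, (i < d)%nat -> F e i = 0.

Definition lyap_stable (d : nat) (F : state -> state) (e : state) : Prop :=
  forall eps, 0 < eps -> exists del, 0 < del /\
    forall x T, is_solution d F x T -> near d (x 0) e del ->
      forall t, in_horizon T t -> near d (x t) e eps.

Definition loc_attractive (d : nat) (F : state -> state) (e : state) : Prop :=
  exists eta, 0 < eta /\
    forall x, is_solution d F x None -> near d (x 0) e eta ->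
      forall i, (i < d)%nat -> forall eps, 0 < eps ->
        exists T0, forall t, T0 <= t -> Rabs (x t i - e i) < eps.

Definition loc_asympt_stable (d : nat) (F : state -> state) (e : state) : Prop :=
  lyap_stable d F e /\ loc_attractive d F e.

From Stdlib Require Import Reals Lra Lia Arith Classical.
Open Scope R_scope.

(* Near the homeostatic equilibrium the system is a damped cascade driven by A2. A1 decays
   and A2 relaxes on its own, at a rate bounded below as long as 0 <= A2 <= 2 A2star. Each
   later compartment, in the order A3, P_1, ..., P_NP, R_1, ..., R_NR, relaxes at a rate at
   least beta (a transit rate, or V_e, which is bounded below by its value at C = BSL) and is
   forced only by the deviations of A2 and of the preceding compartment, with a gain G.
   A barrier argument keeps the i-th deviation below K^i delta, K = 2G/beta + 1, which gives
   stability; once A2 and the preceding compartment are small, so is the next one, which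
   gives attractivity. *)

Lemma derivable_pt_lim_cont (y : R -> R) (t l : R) :
  derivable_pt_lim y t l -> forall eps, 0 < eps ->
  exists del, 0 < del /\ forall u, Rabs (u - t) < del -> Rabs (y u - y t) < eps.
Proof.
  intros Hy eps Heps.
  assert (Hc : continuity_pt y t) by (apply derivable_continuous_pt; exists l; exact Hy).
  destruct (Hc eps Heps) as [del [Hdel Hu]].
  exists del; split; [lra|]. intros u Hut.
  destruct (Req_dec u t) as [->|Hne].
  - rewrite Rminus_diag, Rabs_R0; lra.
  - apply (Hu u). split; [split; [exact I | auto] | exact Hut].
Qed.

Lemma derivable_pt_lim_add_linear (y : R -> R) (t l a : R) :
  derivable_pt_lim y t l -> derivable_pt_lim (fun s => y s + a * s) t (l + a).
Proof.
  intros Hy eps Heps. destruct (Hy eps Heps) as [del Hd]. exists del. intros h Hh Hdel.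
  replace ((y (t + h) + a * (t + h) - (y t + a * t)) / h - (l + a))
    with ((y (t + h) - y t) / h - l) by (field; exact Hh).
  auto.
Qed.

Lemma derivable_pt_lim_left_below (y : R -> R) (m l del : R) :
  derivable_pt_lim y m l -> 0 < del ->
  (forall u, m - del < u < m -> y u < y m) -> 0 <= l.
Proof.
  intros Hy Hdel Hbelow. apply Rnot_lt_le. intro Hl.
  destruct (Hy (- l / 2)) as [del' Hq]; [lra|].
  pose proof (cond_pos del') as Hdel'.
  pose proof (Rmin_l (del / 2) (del' / 2)). pose proof (Rmin_r (del / 2) (del' / 2)).
  set (h := Rmin (del / 2) (del' / 2)) in *.
  assert (Hh : 0 < h) by (apply Rmin_pos; lra).
  assert (Hqh : Rabs ((y (m + - h) - y m) / - h - l) < - l / 2).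
  { apply Hq; [lra | rewrite Rabs_left; lra]. }
  apply Rabs_def2 in Hqh as [Hqh _].
  assert (Hyh := Hbelow (m + - h) ltac:(lra)).
  set (q := (y (m + - h) - y m) / - h) in Hqh.
  assert (q * - h = y (m + - h) - y m) by (unfold q; field; lra).
  assert (q < 0) by lra.
  nra.
Qed.

Lemma first_exit (y dy : R -> R) (t0 t1 c : R) : t0 <= t1 ->
  (forall t, t0 < t <= t1 -> derivable_pt_lim y t (dy t)) ->
  (forall eps, 0 < eps -> exists del, 0 < del /\
     forall u, t0 <= u < t0 + del -> u <= t1 -> Rabs (y u - y t0) < eps) ->
  y t0 < c -> c <= y t1 ->
  exists m, t0 < m <= t1 /\ y m = c /\ forall u, t0 <= u < m -> y u < c.
Proof.
  intros H01 Hd Hrc H0 H1.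
  set (E := fun s => t0 <= s <= t1 /\ forall u, t0 <= u <= s -> y u < c).
  assert (HE0 : E t0) by (split; [lra | intros u Hu; replace u with t0 by lra; exact H0]).
  destruct (completeness E) as [m [Hub Hlub]];
    [exists t1; intros s [Hs _]; lra | exists t0; exact HE0 |].
  assert (Hm0 : t0 <= m) by (apply Hub, HE0).
  assert (Hm1 : m <= t1) by (apply Hlub; intros s [Hs _]; lra).
  assert (Hbelow : forall u, t0 <= u < m -> y u < c).
  { intros u Hu. apply NNPP. intro Hn.
    enough (m <= u) by lra. apply Hlub. intros s [Hs Hys].
    apply Rnot_lt_le. intro Hus. apply Hn, Hys. lra. }
  assert (Hcm : forall eps, 0 < eps -> exists del, 0 < del /\
      forall u, t0 <= u <= t1 -> Rabs (u - m) < del -> Rabs (y u - y m) < eps).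
  { intros eps Heps. destruct (Req_dec m t0) as [Em|Em].
    - destruct (Hrc eps Heps) as [del [Hdel Hc]]. exists del; split; [exact Hdel|].
      intros u Hu Hum. subst m. apply Rabs_def2 in Hum. apply Hc; lra.
    - destruct (derivable_pt_lim_cont y m (dy m) (Hd m ltac:(lra)) eps Heps) as [del [Hdel Hc]].
      exists del; split; [exact Hdel|]. intros u _ Hum. exact (Hc u Hum). }
  assert (Hle : y m <= c).
  { apply Rnot_lt_le. intro Hgt.
    assert (Htm : t0 < m) by (destruct (Req_dec m t0) as [Em|]; [subst m; lra | lra]).
    destruct (Hcm (y m - c)) as [del [Hdel Hc]]; [lra|].
    pose proof (Rmax_l t0 (m - del / 2)). pose proof (Rmax_r t0 (m - del / 2)).
    set (u := Rmax t0 (m - del / 2)) in *.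
    assert (Hum : u < m) by (apply Rmax_lub_lt; lra).
    specialize (Hc u ltac:(lra) ltac:(apply Rabs_def1; lra)). apply Rabs_def2 in Hc.
    specialize (Hbelow u ltac:(lra)). lra. }
  assert (Hge : c <= y m).
  { apply Rnot_lt_le. intro Hlt.
    assert (Hmt : m < t1) by (destruct (Req_dec m t1) as [Em|]; [subst m; lra | lra]).
    destruct (Hcm (c - y m)) as [del [Hdel Hc]]; [lra|].
    pose proof (Rmin_l t1 (m + del / 2)). pose proof (Rmin_r t1 (m + del / 2)).
    set (s := Rmin t1 (m + del / 2)) in *.
    assert (Hms : m < s) by (apply Rmin_glb_lt; lra).
    enough (HEs : E s) by (pose proof (Hub s HEs); lra).
    split; [lra|]. intros u Hu. destruct (Rlt_le_dec u m); [apply Hbelow; lra|].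
    specialize (Hc u ltac:(lra) ltac:(apply Rabs_def1; lra)). apply Rabs_def2 in Hc. lra. }
  exists m. split; [|split; [lra | exact Hbelow]].
  split; [|exact Hm1]. destruct (Req_dec m t0) as [Em|]; [subst m; lra | lra].
Qed.

Lemma stays_below (y dy : R -> R) (t0 t1 c : R) :
  (forall t, t0 < t <= t1 -> derivable_pt_lim y t (dy t)) ->
  (forall eps, 0 < eps -> exists del, 0 < del /\
     forall u, t0 <= u < t0 + del -> u <= t1 -> Rabs (y u - y t0) < eps) ->
  y t0 < c ->
  (forall t, t0 < t <= t1 -> y t = c -> dy t < 0) ->
  forall t, t0 <= t <= t1 -> y t < c.
Proof.
  intros Hd Hrc H0 Hout t Ht. apply Rnot_le_lt. intro Hct.
  destruct (first_exit y dy t0 t c) as [m [Hm [Hym Hbelow]]]; try lra.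
  - intros s Hs. apply Hd. lra.
  - intros eps Heps. destruct (Hrc eps Heps) as [del [Hdel Hc]].
    exists del; split; [exact Hdel|]. intros u Hu Hut. apply Hc; lra.
  - assert (0 <= dy m).
    { apply (derivable_pt_lim_left_below y m (dy m) (m - t0)); [apply Hd; lra | lra |].
      intros u Hu. rewrite Hym. apply Hbelow. lra. }
    pose proof (Hout m ltac:(lra) Hym). lra.
Qed.

Lemma in_horizon_le (T : option R) (t u : R) :
  in_horizon T t -> 0 <= u <= t -> in_horizon T u.
Proof. destruct T; unfold in_horizon; intros; lra. Qed.

Lemma abs_stays_below_on_horizon (y dy : R -> R) (T : option R) (c : R) :
  (forall t, in_horizon T t -> 0 < t -> derivable_pt_lim y t (dy t)) ->
  (forall eps, 0 < eps -> exists del, 0 < del /\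
     forall t, 0 <= t < del -> in_horizon T t -> Rabs (y t - y 0) < eps) ->
  Rabs (y 0) < c ->
  (forall t, in_horizon T t -> 0 < t -> Rabs (y t) = c -> y t * dy t < 0) ->
  forall t, in_horizon T t -> Rabs (y t) < c.
Proof.
  intros Hd Hrc H0 Hout t Ht.
  assert (Ht0 : 0 <= t) by apply Ht.
  assert (Hc : 0 < c) by (pose proof (Rabs_pos (y 0)); lra).
  assert (Hsub : forall s, 0 <= s <= t -> in_horizon T s) by (intros; eapply in_horizon_le; eauto).
  apply Rabs_def2 in H0 as [H0u H0l]. apply Rabs_def1.
  - apply (stays_below y dy 0 t c); try lra.
    + intros s Hs. apply Hd; [apply Hsub |]; lra.
    + intros eps Heps. destruct (Hrc eps Heps) as [del [Hdel Hr]].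
      exists del; split; [exact Hdel|]. intros u Hu Hut. apply Hr; [| apply Hsub]; lra.
    + intros s Hs Hys. assert (Habs : Rabs (y s) = c) by (rewrite Hys; apply Rabs_pos_eq; lra).
      pose proof (Hout s (Hsub s ltac:(lra)) ltac:(lra) Habs). rewrite Hys in *. nra.
  - enough (- y t < c) by lra.
    apply (stays_below (fun s => - y s) (fun s => - dy s) 0 t c); try lra.
    + intros s Hs. apply (derivable_pt_lim_opp y). apply Hd; [apply Hsub |]; lra.
    + intros eps Heps. destruct (Hrc eps Heps) as [del [Hdel Hr]].
      exists del; split; [exact Hdel|]. intros u Hu Hut.
      replace (- y u - - y 0) with (- (y u - y 0)) by ring. rewrite Rabs_Ropp.
      apply Hr; [| apply Hsub]; lra.
    + intros s Hs Hys.
      assert (Habs : Rabs (y s) = c) by (rewrite <- Rabs_Ropp, Hys; apply Rabs_pos_eq; lra).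
      pose proof (Hout s (Hsub s ltac:(lra)) ltac:(lra) Habs).
      replace (y s) with (- c) in * by lra. nra.
Qed.

(* Below eps the function is trapped; above eps the affine function [y t + eta/2 * t]
   decreases, which cannot last for the time [tau]. *)
Lemma eventually_below (y dy : R -> R) (T1 eps eta : R) : 0 < eta ->
  (forall t, T1 <= t -> derivable_pt_lim y t (dy t)) ->
  (forall t, T1 <= t -> eps <= y t -> dy t <= - eta) ->
  exists T2, forall t, T2 <= t -> y t < eps.
Proof.
  intros Heta Hd Hdesc.
  set (tau := 2 * (Rabs (y T1) + Rabs eps + 1) / eta).
  assert (Htau : eta * tau = 2 * (Rabs (y T1) + Rabs eps + 1)) by (unfold tau; field; lra).
  assert (Htau0 : 0 < tau) by (pose proof (Rabs_pos (y T1)); pose proof (Rabs_pos eps); nra).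
  exists (T1 + tau).
  destruct (classic (exists s, T1 <= s <= T1 + tau /\ y s < eps)) as [[s [Hs Hys]] | Hnone].
  - intros t Ht. apply (stays_below y dy s t eps); try lra.
    + intros u Hu. apply Hd. lra.
    + intros e He. destruct (derivable_pt_lim_cont y s (dy s) (Hd s ltac:(lra)) e He)
        as [del [Hdel Hc]].
      exists del; split; [exact Hdel|]. intros u Hu _. apply Hc, Rabs_def1; lra.
    + intros u Hu Hyu. pose proof (Hdesc u ltac:(lra) ltac:(lra)). lra.
  - exfalso.
    assert (Habove : forall s, T1 <= s <= T1 + tau -> eps <= y s).
    { intros s Hs. apply Rnot_lt_le. intro Hlt. apply Hnone. exists s. auto. }
    assert (Hdl : forall t, T1 <= t ->
        derivable_pt_lim (fun s => y s + eta / 2 * s) t (dy t + eta / 2)).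
    { intros t Ht. apply derivable_pt_lim_add_linear, Hd, Ht. }
    assert (Hg : y (T1 + tau) + eta / 2 * (T1 + tau) < y T1 + eta / 2 * T1 + 1).
    { apply (stays_below (fun s => y s + eta / 2 * s) (fun s => dy s + eta / 2) T1 (T1 + tau));
        try lra.
      - intros u Hu. apply Hdl. lra.
      - intros e He. destruct (derivable_pt_lim_cont _ _ _ (Hdl T1 ltac:(lra)) e He)
          as [del [Hdel Hc]].
        exists del; split; [exact Hdel|]. intros u Hu _. apply Hc, Rabs_def1; lra.
      - intros u Hu _. pose proof (Hdesc u ltac:(lra) (Habove u ltac:(lra))). lra. }
    pose proof (Habove (T1 + tau) ltac:(lra)).
    pose proof (Rle_abs (y T1)). pose proof (Rle_abs (- eps)). rewrite Rabs_Ropp in *.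
    lra.
Qed.

Lemma damped_eventually_small (y dy : R -> R) (T1 beta eps : R) : 0 < beta -> 0 < eps ->
  (forall t, T1 <= t -> derivable_pt_lim y t (dy t)) ->
  (forall t, T1 <= t -> exists b f,
     beta <= b /\ dy t = - b * y t + f /\ Rabs f <= beta * eps / 2) ->
  exists T2, forall t, T2 <= t -> Rabs (y t) < eps.
Proof.
  intros Hbeta Heps Hd Hdamp.
  destruct (eventually_below y dy T1 eps (beta * eps / 2)) as [Ta Ha]; [nra | exact Hd | |].
  { intros t Ht Hy. destruct (Hdamp t Ht) as [b [f [Hb [-> Hf]]]].
    pose proof (Rle_abs f). nra. }
  destruct (eventually_below (fun s => - y s) (fun s => - dy s) T1 eps (beta * eps / 2))
    as [Tb Hb]; [nra | intros t Ht; apply (derivable_pt_lim_opp y), Hd, Ht | |].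
  { intros t Ht Hy. destruct (Hdamp t Ht) as [b [f [Hb [-> Hf]]]].
    pose proof (Rle_abs (- f)). rewrite Rabs_Ropp in *. nra. }
  exists (Rmax Ta Tb). intros t Ht.
  pose proof (Rmax_l Ta Tb). pose proof (Rmax_r Ta Tb).
  specialize (Ha t ltac:(lra)). specialize (Hb t ltac:(lra)). apply Rabs_def1; lra.
Qed.

Lemma damped_inward (beta b f z c : R) : 0 < beta -> beta <= b ->
  Rabs z = c -> Rabs f < beta * c -> z * (- b * z + f) < 0.
Proof.
  intros Hbeta Hb Hz Hf.
  assert (Hc : 0 < c) by (pose proof (Rabs_pos f); nra).
  assert (Hzz : z * z = c * c) by (rewrite <- Hz, <- Rabs_mult; symmetry; apply Rabs_pos_eq; nra).
  assert (Hzf : z * f <= c * Rabs f) by (rewrite <- Hz, <- Rabs_mult; apply Rle_abs).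
  nra.
Qed.

Definition forced_damped (F : state -> state) (e : state) (beta G : R) (x : state) (i : nat)
    : Prop :=
  exists b f, beta <= b /\ F x i = - b * (x i - e i) + f /\
    Rabs f <= G * (Rabs (x 1%nat - e 1%nat) + Rabs (x (i - 1)%nat - e (i - 1)%nat)).

(* Coordinate 1 (A2 in the model) drives the cascade. *)
Definition damped_chain (d : nat) (F : state -> state) (e : state) (r beta G : R) : Prop :=
  forall x, Rabs (x 1%nat - e 1%nat) <= r ->
    (forall i, (i < 2)%nat -> exists b, beta <= b /\ F x i = - b * (x i - e i)) /\
    (forall i, (2 <= i < d)%nat -> forced_damped F e beta G x i).

Lemma forced_damped_intro (F : state -> state) (e : state) (beta G : R) (x : state) (i : nat)
    (b f c1 c2 : R) :
  beta <= b -> c1 <= G -> c2 <= G ->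
  F x i = - b * (x i - e i) + f ->
  Rabs f <= c1 * Rabs (x 1%nat - e 1%nat) + c2 * Rabs (x (i - 1)%nat - e (i - 1)%nat) ->
  forced_damped F e beta G x i.
Proof.
  intros Hb H1 H2 HF Hf. exists b, f. repeat split; [exact Hb | exact HF |].
  pose proof (Rabs_pos (x 1%nat - e 1%nat)). pose proof (Rabs_pos (x (i - 1)%nat - e (i - 1)%nat)).
  nra.
Qed.

Section DampedChain.

Variables (d : nat) (F : state -> state) (e : state) (r beta G : R).

Lemma solution_deviation_derivable (x : R -> state) (T : option R) (i : nat) (t : R) :
  is_solution d F x T -> (i < d)%nat -> in_horizon T t -> 0 < t ->
  derivable_pt_lim (fun s => x s i - e i) t (F (x t) i).
Proof.
  intros [Hd _] Hi Ht Hpos.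
  rewrite <- (Rminus_0_r (F (x t) i)).
  apply (derivable_pt_lim_minus (fun s => x s i) (fun _ => e i)).
  - apply Hd; assumption.
  - apply derivable_pt_lim_const.
Qed.

Lemma solution_deviation_stays_below (x : R -> state) (T : option R) (i : nat) (c : R) :
  is_solution d F x T -> (i < d)%nat -> Rabs (x 0 i - e i) < c ->
  (forall t, in_horizon T t -> 0 < t -> Rabs (x t i - e i) = c ->
     (x t i - e i) * F (x t) i < 0) ->
  forall t, in_horizon T t -> Rabs (x t i - e i) < c.
Proof.
  intros Hx Hi H0 Hout.
  apply (abs_stays_below_on_horizon (fun s => x s i - e i) (fun s => F (x s) i) T c);
    [| | exact H0 | exact Hout].
  - intros t Ht Hpos. exact (solution_deviation_derivable x T i t Hx Hi Ht Hpos).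
  - destruct Hx as [_ Hrc]. intros eps Heps.
    destruct (Hrc i Hi eps Heps) as [del [Hdel Hc]]. exists del; split; [exact Hdel|].
    intros t Ht Hh. replace (x t i - e i - (x 0 i - e i)) with (x t i - x 0 i) by ring.
    apply Hc; assumption.
Qed.

Hypotheses (Hr : 0 < r) (Hbeta : 0 < beta) (HG : 0 < G) (Hd : (1 < d)%nat)
  (Hchain : damped_chain d F e r beta G).

Lemma driver_stays_close (x : R -> state) (T : option R) (c : R) :
  is_solution d F x T -> c <= r -> Rabs (x 0 1%nat - e 1%nat) < c ->
  forall t, in_horizon T t -> Rabs (x t 1%nat - e 1%nat) < c.
Proof.
  intros Hx Hcr H0. apply solution_deviation_stays_below; [exact Hx | exact Hd | exact H0 |].
  intros t _ _ Hz. destruct (Hchain (x t) ltac:(lra)) as [Hlow _].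
  destruct (Hlow 1%nat ltac:(lia)) as [b [Hb ->]].
  rewrite <- (Rplus_0_r (- b * _)).
  apply (damped_inward beta b 0 _ c Hbeta Hb Hz).
  rewrite Rabs_R0. pose proof (Rabs_pos (x 0 1%nat - e 1%nat)). nra.
Qed.

Let K := 2 * G / beta + 1.

Lemma K_ge_1 : 1 <= K.
Proof. unfold K. assert (0 < 2 * G / beta) by (apply Rdiv_lt_0_compat; lra). lra. Qed.

Lemma beta_K : beta * K = 2 * G + beta.
Proof. unfold K. field. lra. Qed.

(* The i-th deviation stays below K^i delta: at that level the damping beta K^i delta
   beats the forcing, which is at most 2 G K^(i-1) delta. *)
Lemma chain_stays_close (x : R -> state) (T : option R) (delta : R) :
  is_solution d F x T -> delta <= r -> near d (x 0) e delta ->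
  forall i, (i < d)%nat -> forall t, in_horizon T t -> Rabs (x t i - e i) < K ^ i * delta.
Proof.
  intros Hx Hdr H0.
  assert (Hdelta : 0 < delta)
    by (pose proof (H0 0%nat ltac:(lia)); pose proof (Rabs_pos (x 0 0%nat - e 0%nat)); lra).
  assert (Hdrive := driver_stays_close x T delta Hx Hdr (H0 1%nat Hd)).
  assert (Hpow : forall n, delta <= K ^ n * delta)
    by (intro n; pose proof (pow_R1_Rle K n K_ge_1); nra).
  intro i. induction i as [i IH] using lt_wf_ind. intro Hi.
  apply solution_deviation_stays_below; [exact Hx | exact Hi | |].
  { pose proof (H0 i Hi). pose proof (Hpow i). lra. }
  intros t Ht _ Hz. destruct (Hchain (x t) ltac:(pose proof (Hdrive t Ht); lra)) as [Hlow Hhigh].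
  destruct (Nat.lt_ge_cases i 2) as [Hlt | Hge].
  - destruct (Hlow i Hlt) as [b [Hb ->]].
    rewrite <- (Rplus_0_r (- b * _)).
    apply (damped_inward beta b 0 _ _ Hbeta Hb Hz).
    rewrite Rabs_R0. pose proof (Hpow i). pose proof (pow_R1_Rle K i K_ge_1). nra.
  - destruct (Hhigh i ltac:(lia)) as [b [f [Hb [-> Hf]]]].
    apply (damped_inward beta b f _ _ Hbeta Hb Hz).
    replace i with (S (i - 1)) by lia. simpl pow.
    replace (S (i - 1) - 1)%nat with (i - 1)%nat in Hf by lia.
    pose proof (IH (i - 1)%nat ltac:(lia) ltac:(lia) t Ht). pose proof (Hdrive t Ht).
    pose proof (Hpow (i - 1)%nat). pose proof beta_K.
    set (P := K ^ (i - 1) * delta) in *.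
    assert (G * (Rabs (x t 1%nat - e 1%nat) + Rabs (x t (i - 1)%nat - e (i - 1)%nat)) < G * (2 * P))
      by (apply Rmult_lt_compat_l; lra).
    replace (beta * (K * K ^ (i - 1) * delta)) with ((2 * G + beta) * P)
      by (rewrite <- beta_K; unfold P; ring).
    nra.
Qed.

Lemma damped_chain_lyap_stable : lyap_stable d F e.
Proof.
  intros eps Heps.
  assert (HKd : 0 < K ^ d) by (pose proof (pow_R1_Rle K d K_ge_1); lra).
  assert (Hm : 0 < Rmin eps r) by (apply Rmin_pos; lra).
  exists (Rmin eps r / K ^ d). split; [apply Rdiv_lt_0_compat; assumption|].
  intros x T Hx H0 t Ht i Hi.
  assert (Hle : forall n, (n <= d)%nat -> K ^ n * (Rmin eps r / K ^ d) <= Rmin eps r).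
  { intros n Hn. pose proof (Rle_pow K n d K_ge_1 Hn). pose proof (pow_R1_Rle K n K_ge_1).
    replace (K ^ n * (Rmin eps r / K ^ d)) with (Rmin eps r * (K ^ n / K ^ d)) by (field; lra).
    enough (K ^ n / K ^ d <= 1) by nra.
    apply (Rmult_le_reg_r (K ^ d)); [lra|]. field_simplify; lra. }
  pose proof (Rmin_l eps r). pose proof (Rmin_r eps r).
  pose proof (Hle 0%nat ltac:(lia)). pose proof (Hle i ltac:(lia)).
  pose proof (chain_stays_close x T (Rmin eps r / K ^ d) Hx ltac:(simpl in *; lra) H0 i Hi t Ht).
  lra.
Qed.

Lemma damped_chain_loc_attractive : loc_attractive d F e.
Proof.
  exists r. split; [exact Hr|]. intros x Hx H0.
  assert (Hhor : forall t, 0 <= t -> in_horizon None t)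
    by (intros t Ht; split; [exact Ht | exact I]).
  assert (Hregion : forall t, 0 <= t -> Rabs (x t 1%nat - e 1%nat) <= r).
  { intros t Ht. left.
    apply (driver_stays_close x None r Hx); [lra | apply H0, Hd | apply Hhor, Ht]. }
  intro i. induction i as [i IH] using lt_wf_ind. intros Hi eps Heps.
  destruct (Nat.lt_ge_cases i 2) as [Hlt | Hge].
  - apply (damped_eventually_small _ (fun s => F (x s) i) 1 beta eps Hbeta Heps).
    + intros t Ht.
      apply (solution_deviation_derivable x None); [exact Hx | exact Hi | apply Hhor |]; lra.
    + intros t Ht. destruct (Hchain (x t) (Hregion t ltac:(lra))) as [Hlow _].
      destruct (Hlow i Hlt) as [b [Hb Hf]]. exists b, 0.
      rewrite Hf, Rabs_R0. repeat split; [exact Hb | ring | nra].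
  - set (eps' := beta * eps / (4 * G)).
    assert (Heps' : 0 < eps') by (apply Rdiv_lt_0_compat; nra).
    destruct (IH 1%nat ltac:(lia) Hd eps' Heps') as [T1 H1].
    destruct (IH (i - 1)%nat ltac:(lia) ltac:(lia) eps' Heps') as [T2 H2].
    set (T0 := Rmax 1 (Rmax T1 T2)).
    assert (HT0 : 1 <= T0 /\ T1 <= T0 /\ T2 <= T0).
    { pose proof (Rmax_l 1 (Rmax T1 T2)). pose proof (Rmax_r 1 (Rmax T1 T2)).
      pose proof (Rmax_l T1 T2). pose proof (Rmax_r T1 T2). unfold T0. lra. }
    apply (damped_eventually_small _ (fun s => F (x s) i) T0 beta eps Hbeta Heps).
    + intros t Ht.
      apply (solution_deviation_derivable x None); [exact Hx | exact Hi | apply Hhor |]; lra.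
    + intros t Ht. destruct (Hchain (x t) (Hregion t ltac:(lra))) as [_ Hhigh].
      destruct (Hhigh i ltac:(lia)) as [b [f [Hb [Hf Hfb]]]]. exists b, f.
      repeat split; [exact Hb | exact Hf |].
      specialize (H1 t ltac:(lra)). specialize (H2 t ltac:(lra)).
      assert (G * (Rabs (x t 1%nat - e 1%nat) + Rabs (x t (i - 1)%nat - e (i - 1)%nat))
              <= G * (2 * eps')) by (apply Rmult_le_compat_l; lra).
      replace (beta * eps / 2) with (G * (2 * eps')) by (unfold eps'; field; lra). lra.
Qed.

Lemma damped_chain_equilibrium : is_equilibrium d F e.
Proof.
  intros i Hi.
  destruct (Hchain e ltac:(rewrite Rminus_diag, Rabs_R0; lra)) as [Hlow Hhigh].
  destruct (Nat.lt_ge_cases i 2) as [Hlt | Hge].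
  - destruct (Hlow i Hlt) as [b [_ ->]]. rewrite Rminus_diag. ring.
  - destruct (Hhigh i ltac:(lia)) as [b [f [_ [-> Hf]]]].
    rewrite !Rminus_diag, Rabs_R0, Rplus_0_r, Rmult_0_r in Hf.
    assert (f = 0)
      by (destruct (Req_dec f 0) as [| Hf0]; [assumption | pose proof (Rabs_pos_lt f Hf0); lra]).
    subst f. rewrite Rminus_diag. ring.
Qed.

Theorem damped_chain_loc_asympt_stable :
  is_equilibrium d F e /\ loc_asympt_stable d F e.
Proof.
  split; [exact damped_chain_equilibrium |].
  split; [exact damped_chain_lyap_stable | exact damped_chain_loc_attractive].
Qed.

End DampedChain.

Lemma Rdiv_le_cross (a b c d : R) : 0 < b -> 0 < d -> a * d <= c * b -> a / b <= c / d.
Proof.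
  intros Hb Hd H.
  apply (Rmult_le_reg_r (b * d)); [nra|].
  replace (a / b * (b * d)) with (a * d) by (field; lra).
  replace (c / d * (b * d)) with (c * b) by (field; lra). exact H.
Qed.

Lemma Rdiv_le_0_compat (a b : R) : 0 <= a -> 0 < b -> 0 <= a / b.
Proof. intros. apply Rmult_le_pos; [| left; apply Rinv_0_lt_compat]; assumption. Qed.

Lemma sat_diff (a u v : R) : a + u <> 0 -> a + v <> 0 ->
  u / (a + u) - v / (a + v) = a * (u - v) / ((a + u) * (a + v)).
Proof. intros. field. auto. Qed.

Lemma sat_le (a u v : R) : 0 < a -> 0 <= v <= u -> v / (a + v) <= u / (a + u).
Proof. intros. apply Rdiv_le_cross; nra. Qed.

Lemma sat_le_1 (a u : R) : 0 < a -> 0 <= u -> u / (a + u) <= 1.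
Proof. intros. rewrite <- (Rdiv_1_r 1). apply Rdiv_le_cross; lra. Qed.

Lemma sat_lipschitz (a u v : R) : 0 < a -> 0 <= u -> 0 <= v ->
  Rabs (u / (a + u) - v / (a + v)) <= Rabs (u - v) / a.
Proof.
  intros Ha Hu Hv. rewrite sat_diff by lra.
  unfold Rdiv. rewrite !Rabs_mult, Rabs_inv, (Rabs_pos_eq a), (Rabs_pos_eq ((a + u) * (a + v)))
    by (try apply Rmult_le_pos; lra).
  fold (Rdiv (a * Rabs (u - v)) ((a + u) * (a + v))). fold (Rdiv (Rabs (u - v)) a).
  apply Rdiv_le_cross; [nra | lra |].
  assert (Hw : 0 <= Rabs (u - v) * (a * u + a * v + u * v))
    by (apply Rmult_le_pos; [apply Rabs_pos | nra]).
  nra.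
Qed.

Ltac case_index := repeat (first [
   match goal with |- context [Nat.eqb ?a ?b] =>
     destruct (Nat.eqb_spec a b); try (exfalso; lia) end
 | match goal with |- context [Nat.leb ?a ?b] =>
     destruct (Nat.leb_spec a b); try (exfalso; lia) end ]; cbv iota).

Definition Ve_star (p : params) : R := Ve p (equil p).
Definition Ve_min (p : params) : R := Smax p * BSL p / (SC50 p + BSL p) * kP p.
Definition Ve_lip (p : params) : R := Smax p * kP p / (SC50 p * V1 p).

(* Lower bound, for 0 <= A2 <= 2 A2star, of the rate b in A2' = - b (A2 - A2star). *)
Definition A2_rate (p : params) : R :=
  Vmax p * KM p / (V1 p * (KM p + 2 * (A2star p / V1 p)) * (KM p + A2star p / V1 p)).

Definition chain_rate (p : params) : R :=
  Rmin (Rmin (ka p) (A2_rate p)) (Rmin (Rmin (k32 p) (Ve_min p)) (Rmin (kP p) (kR p))).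

Definition chain_gain (p : params) : R :=
  k23 p + Smax p * kP p + P1star p * Ve_lip p + kP p + kR p.

Definition in_region (p : params) (x : state) : Prop := Rabs (x 1%nat - A2star p) <= A2star p.

Section PerezRuixo.

Variable p : params.
Hypotheses (Hka : 0 < ka p) (Hkepo : 0 < kepo p) (HVmax : 0 < Vmax p) (HKM : 0 < KM p)
  (HV1 : 0 < V1 p) (Hk23 : 0 < k23 p) (Hk32 : 0 < k32 p) (HBSL : 0 < BSL p)
  (Hkin : 0 < kin p) (HSmax : 0 < Smax p) (HSC50 : 0 < SC50 p) (HNP : (0 < NP p)%nat)
  (HTP : 0 < TP p) (HNR : (0 < NR p)%nat) (HTR : 0 < TR p) (HVk : Vmax p > kepo p)
  (Hev : Nat.even (NP p) = true).

Lemma hP_bounds : (1 <= hP p < NP p)%nat.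
Proof.
  apply Nat.even_spec in Hev as [m Hm]. unfold hP. rewrite Hm, Nat.div2_double. lia.
Qed.

Lemma kP_pos : 0 < kP p.
Proof. unfold kP. apply Rdiv_lt_0_compat; [apply lt_0_INR |]; assumption. Qed.

Lemma kR_pos : 0 < kR p.
Proof. unfold kR. apply Rdiv_lt_0_compat; [apply lt_0_INR |]; assumption. Qed.

Lemma A2star_pos : 0 < A2star p.
Proof.
  unfold A2star. apply Rdiv_lt_0_compat; [| lra]. repeat apply Rmult_lt_0_compat; assumption.
Qed.

Lemma kepo_sat : kepo p = Vmax p * (A2star p / V1 p / (KM p + A2star p / V1 p)).
Proof.
  unfold A2star. field.
  replace (KM p * (Vmax p - kepo p) + kepo p * KM p) with (Vmax p * KM p) by ring.
  repeat split; nra.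
Qed.

Lemma Cstar_pos : 0 < Cstar p.
Proof.
  assert (0 < A2star p / V1 p) by (apply Rdiv_lt_0_compat; [apply A2star_pos | exact HV1]).
  unfold Cstar. lra.
Qed.

Lemma P1star_pos : 0 < P1star p.
Proof.
  pose proof Cstar_pos. pose proof (lt_0_INR _ HNP).
  unfold P1star. apply Rmult_lt_0_compat; apply Rdiv_lt_0_compat; nra.
Qed.

Lemma Ve_sat (x : state) : Ve p x = Smax p * kP p * (conc p x / (SC50 p + conc p x)).
Proof. unfold Ve, Rdiv. ring. Qed.

Lemma Ve_star_P1star : Ve_star p * P1star p = kin p.
Proof.
  pose proof Cstar_pos. pose proof (lt_0_INR _ HNP).
  unfold Ve_star, Ve, P1star, kP. change (conc p (equil p)) with (Cstar p). field. lra.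
Qed.

Lemma kP_transit : kP p * (kin p * (TP p / INR (NP p))) = kin p.
Proof. pose proof (lt_0_INR _ HNP). unfold kP. field. lra. Qed.

Lemma kR_transit : kR p * (kin p * (TR p / INR (NR p))) = kin p.
Proof. pose proof (lt_0_INR _ HNR). unfold kR. field. lra. Qed.

Lemma in_region_A2 (x : state) :
  in_region p x -> 0 <= x 1%nat / V1 p <= 2 * (A2star p / V1 p).
Proof.
  unfold in_region. intro Hx.
  pose proof (Rle_abs (x 1%nat - A2star p)). pose proof (Rle_abs (- (x 1%nat - A2star p))).
  rewrite Rabs_Ropp in *.
  split; [apply Rdiv_le_0_compat; lra |].
  replace (2 * (A2star p / V1 p)) with (2 * A2star p / V1 p) by (field; lra).
  apply Rmult_le_compat_r; [left; apply Rinv_0_lt_compat |]; lra.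
Qed.

Lemma Ve_bounds (x : state) : in_region p x -> Ve_min p <= Ve p x <= Smax p * kP p.
Proof.
  intro Hx. pose proof (in_region_A2 x Hx). pose proof kP_pos.
  assert (Hsk : 0 < Smax p * kP p) by nra.
  assert (Hmin : Ve_min p = Smax p * kP p * (BSL p / (SC50 p + BSL p)))
    by (unfold Ve_min, Rdiv; ring).
  rewrite Hmin, Ve_sat. unfold conc. split.
  - apply Rmult_le_compat_l; [lra |]. apply sat_le; lra.
  - rewrite <- (Rmult_1_r (Smax p * kP p)) at 2.
    apply Rmult_le_compat_l; [lra |]. apply sat_le_1; lra.
Qed.

Lemma Ve_lipschitz (x : state) : in_region p x ->
  Rabs (Ve p x - Ve_star p) <= Ve_lip p * Rabs (x 1%nat - A2star p).
Proof.
  intro Hx. pose proof (in_region_A2 x Hx). pose proof kP_pos. pose proof A2star_pos.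
  assert (Hsk : 0 < Smax p * kP p) by nra.
  assert (0 <= A2star p / V1 p) by (apply Rdiv_le_0_compat; lra).
  unfold Ve_star. rewrite !Ve_sat.
  change (conc p (equil p)) with (BSL p + A2star p / V1 p). unfold conc.
  rewrite <- Rmult_minus_distr_l, Rabs_mult, (Rabs_pos_eq (Smax p * kP p)) by lra.
  eapply Rle_trans; [apply Rmult_le_compat_l; [lra | apply sat_lipschitz; lra] |].
  replace (BSL p + x 1%nat / V1 p - (BSL p + A2star p / V1 p)) with ((x 1%nat - A2star p) / V1 p)
    by (field; lra).
  unfold Rdiv. rewrite Rabs_mult, Rabs_inv, (Rabs_pos_eq (V1 p)) by lra.
  unfold Ve_lip. apply Req_le. field. lra.
Qed.

Lemma A2_damped (x : state) : in_region p x ->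
  exists b, A2_rate p <= b /\ field p x 1%nat = - b * (x 1%nat - A2star p).
Proof.
  intro Hx. pose proof (in_region_A2 x Hx). pose proof A2star_pos.
  assert (0 <= A2star p / V1 p) by (apply Rdiv_le_0_compat; lra).
  set (w := x 1%nat / V1 p) in *. set (ws := A2star p / V1 p) in *.
  exists (Vmax p * KM p / (V1 p * (KM p + w) * (KM p + ws))). split.
  - unfold A2_rate. fold ws.
    apply Rdiv_le_cross; [repeat apply Rmult_lt_0_compat; lra .. |].
    apply Rmult_le_compat_l; [nra |]. apply Rmult_le_compat_r; [lra |].
    apply Rmult_le_compat_l; lra.
  - unfold field. simpl. rewrite kepo_sat. fold ws w.
    replace (x 1%nat) with (V1 p * w) by (unfold w; field; lra).
    replace (A2star p) with (V1 p * ws) by (unfold ws; field; lra).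
    field. repeat split; lra.
Qed.

Lemma A2_rate_pos : 0 < A2_rate p.
Proof.
  pose proof A2star_pos. assert (0 < A2star p / V1 p) by (apply Rdiv_lt_0_compat; lra).
  unfold A2_rate. apply Rdiv_lt_0_compat; [nra | repeat apply Rmult_lt_0_compat; lra].
Qed.

Lemma Ve_min_pos : 0 < Ve_min p.
Proof.
  pose proof kP_pos. unfold Ve_min.
  apply Rmult_lt_0_compat; [apply Rdiv_lt_0_compat |]; nra.
Qed.

Lemma chain_rate_pos : 0 < chain_rate p.
Proof.
  pose proof A2_rate_pos. pose proof Ve_min_pos. pose proof kP_pos. pose proof kR_pos.
  unfold chain_rate. repeat apply Rmin_glb_lt; assumption.
Qed.

Lemma chain_rate_le :
  chain_rate p <= ka p /\ chain_rate p <= A2_rate p /\ chain_rate p <= k32 p /\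
  chain_rate p <= Ve_min p /\ chain_rate p <= kP p /\ chain_rate p <= kR p.
Proof.
  unfold chain_rate. repeat split.
  - eapply Rle_trans; apply Rmin_l.
  - eapply Rle_trans; [apply Rmin_l | apply Rmin_r].
  - eapply Rle_trans; [apply Rmin_r |]. eapply Rle_trans; apply Rmin_l.
  - eapply Rle_trans; [apply Rmin_r |]. eapply Rle_trans; [apply Rmin_l | apply Rmin_r].
  - eapply Rle_trans; [apply Rmin_r |]. eapply Rle_trans; [apply Rmin_r | apply Rmin_l].
  - eapply Rle_trans; [apply Rmin_r |]. eapply Rle_trans; apply Rmin_r.
Qed.

Lemma Ve_lip_pos : 0 < Ve_lip p.
Proof. pose proof kP_pos. unfold Ve_lip. apply Rdiv_lt_0_compat; nra. Qed.

Lemma chain_gain_ge :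
  0 <= chain_gain p /\ k23 p <= chain_gain p /\ Smax p * kP p <= chain_gain p /\
  P1star p * Ve_lip p <= chain_gain p /\ kP p <= chain_gain p /\ kR p <= chain_gain p.
Proof.
  pose proof kP_pos. pose proof kR_pos. pose proof P1star_pos. pose proof Ve_lip_pos.
  assert (0 < Smax p * kP p) by nra. assert (0 < P1star p * Ve_lip p) by nra.
  unfold chain_gain. repeat split; lra.
Qed.

Lemma chain_gain_pos : 0 < chain_gain p.
Proof. pose proof kR_pos. pose proof chain_gain_ge. lra. Qed.

Lemma Ve_mul_abs (x : state) (z : R) : in_region p x ->
  Rabs (Ve p x * z) <= Smax p * kP p * Rabs z.
Proof.
  intro Hx. pose proof (Ve_bounds x Hx). pose proof Ve_min_pos.
  rewrite Rabs_mult, (Rabs_pos_eq (Ve p x)) by lra.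
  apply Rmult_le_compat_r; [apply Rabs_pos | lra].
Qed.

Lemma Ve_dev_abs (x : state) : in_region p x ->
  Rabs ((Ve p x - Ve_star p) * P1star p) <= P1star p * Ve_lip p * Rabs (x 1%nat - A2star p).
Proof.
  intro Hx. pose proof (Ve_lipschitz x Hx). pose proof P1star_pos.
  rewrite Rabs_mult, (Rabs_pos_eq (P1star p)) by lra. nra.
Qed.

Local Notation forced x i :=
  (forced_damped (field p) (equil p) (chain_rate p) (chain_gain p) x i).

Ltac chain_bounds :=
  pose proof chain_rate_le as (? & ? & ? & ? & ? & ?);
  pose proof chain_gain_ge as (? & ? & ? & ? & ? & ?);
  pose proof hP_bounds; pose proof kP_pos; pose proof kR_pos.

Lemma A3_forced (x : state) : forced x 2.
Proof.
  chain_bounds.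
  apply (forced_damped_intro _ _ _ _ x 2 (k32 p) (k23 p * (x 1%nat - A2star p)) (k23 p) 0);
    try lra; unfold field, equil; case_index.
  - field. lra.
  - rewrite Rabs_mult, (Rabs_pos_eq (k23 p)) by lra. lra.
Qed.

Lemma P1_forced (x : state) : in_region p x -> forced x 3.
Proof.
  intro Hx. chain_bounds. pose proof (Ve_bounds x Hx). pose proof (Ve_dev_abs x Hx).
  apply (forced_damped_intro _ _ _ _ x 3 (Ve p x) (- ((Ve p x - Ve_star p) * P1star p))
           (P1star p * Ve_lip p) 0); try lra; unfold field, equil; case_index.
  - pose proof Ve_star_P1star. lra.
  - rewrite Rabs_Ropp. lra.
Qed.

Lemma P_Ve_transit_forced (x : state) (i : nat) :
  in_region p x -> (4 <= i <= 2 + hP p)%nat -> forced x i.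
Proof.
  intros Hx Hi. chain_bounds. pose proof (Ve_bounds x Hx).
  pose proof (Ve_mul_abs x (x (i - 1)%nat - P1star p) Hx).
  apply (forced_damped_intro _ _ _ _ x i (Ve p x) (Ve p x * (x (i - 1)%nat - P1star p))
           0 (Smax p * kP p)); try lra; unfold field, equil; case_index.
  - ring.
  - lra.
Qed.

Lemma P_mid_forced (x : state) : in_region p x -> forced x (3 + hP p).
Proof.
  intro Hx. chain_bounds. pose proof (Ve_dev_abs x Hx).
  pose proof (Ve_mul_abs x (x (2 + hP p)%nat - P1star p) Hx).
  replace (3 + hP p - 1)%nat with (2 + hP p)%nat in * by lia.
  apply (forced_damped_intro _ _ _ _ x (3 + hP p) (kP p)
           (Ve p x * (x (2 + hP p)%nat - P1star p) + (Ve p x - Ve_star p) * P1star p)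
           (P1star p * Ve_lip p) (Smax p * kP p)); try lra;
    replace (3 + hP p - 1)%nat with (2 + hP p)%nat by lia; unfold field, equil; case_index.
  - pose proof Ve_star_P1star. pose proof kP_transit. lra.
  - eapply Rle_trans; [apply Rabs_triang | lra].
Qed.

Lemma P_tail_forced (x : state) (i : nat) : (4 + hP p <= i <= 2 + NP p)%nat -> forced x i.
Proof.
  intro Hi. chain_bounds.
  apply (forced_damped_intro _ _ _ _ x i (kP p)
           (kP p * (x (i - 1)%nat - kin p * (TP p / INR (NP p))))
           0 (kP p)); try lra; unfold field, equil; case_index.
  - ring.
  - rewrite Rabs_mult, (Rabs_pos_eq (kP p)) by lra. lra.
Qed.

Lemma R1_forced (x : state) : forced x (3 + NP p).
Proof.
  chain_bounds.
  apply (forced_damped_intro _ _ _ _ x (3 + NP p) (kR p)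
           (kP p * (x (2 + NP p)%nat - kin p * (TP p / INR (NP p)))) 0 (kP p)); try lra;
    replace (3 + NP p - 1)%nat with (2 + NP p)%nat by lia; unfold field, equil; case_index.
  - pose proof kP_transit. pose proof kR_transit. lra.
  - rewrite Rabs_mult, (Rabs_pos_eq (kP p)) by lra. lra.
Qed.

Lemma R_tail_forced (x : state) (i : nat) :
  (4 + NP p <= i <= 2 + NP p + NR p)%nat -> forced x i.
Proof.
  intro Hi. chain_bounds.
  apply (forced_damped_intro _ _ _ _ x i (kR p)
           (kR p * (x (i - 1)%nat - kin p * (TR p / INR (NR p))))
           0 (kR p)); try lra; unfold field, equil; case_index.
  - ring.
  - rewrite Rabs_mult, (Rabs_pos_eq (kR p)) by lra. lra.
Qed.

Lemma perez_ruixo_damped_chain :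
  damped_chain (dim p) (field p) (equil p) (A2star p) (chain_rate p) (chain_gain p).
Proof.
  intros x Hx. pose proof chain_rate_le as (Hka' & HA2 & _). pose proof hP_bounds. split.
  - intros i Hi. destruct i as [| [| i]]; [| | lia].
    + exists (ka p). split; [exact Hka' | unfold field, equil; simpl; ring].
    + destruct (A2_damped x Hx) as [b [Hb Hf]]. exists b. split; [lra | exact Hf].
  - intros i Hi. unfold dim in Hi.
    destruct (Nat.eq_dec i 2) as [-> | ]; [apply A3_forced |].
    destruct (Nat.eq_dec i 3) as [-> | ]; [apply P1_forced, Hx |].
    destruct (Nat.le_gt_cases i (2 + hP p)); [apply P_Ve_transit_forced; [exact Hx | lia] |].
    destruct (Nat.eq_dec i (3 + hP p)) as [-> | ]; [apply P_mid_forced, Hx |].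
    destruct (Nat.le_gt_cases i (2 + NP p)); [apply P_tail_forced; lia |].
    destruct (Nat.eq_dec i (3 + NP p)) as [-> | ]; [apply R1_forced |].
    apply R_tail_forced. lia.
Qed.

End PerezRuixo.

Theorem proposition5p1 (p : params) :
  0 < ka p -> 0 < kepo p -> 0 < Vmax p -> 0 < KM p -> 0 < V1 p ->
  0 < k23 p -> 0 < k32 p -> 0 < BSL p -> 0 < kin p -> 0 < Smax p ->
  0 < SC50 p -> (0 < NP p)%nat -> 0 < TP p -> (0 < NR p)%nat -> 0 < TR p ->
  Vmax p > kepo p -> Nat.even (NP p) = true ->
  is_equilibrium (dim p) (field p) (equil p) /\
  loc_asympt_stable (dim p) (field p) (equil p).
Proof.
  intros.
  apply (damped_chain_loc_asympt_stable _ _ _ (A2star p) (chain_rate p) (chain_gain p)).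
  - apply A2star_pos; assumption.
  - apply chain_rate_pos; assumption.
  - apply chain_gain_pos; assumption.
  - unfold dim. lia.
  - apply perez_ruixo_damped_chain; assumption.
Qed.
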